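(* Let $r=a/b$ with $a,b$ coprime positive integers, and for $\theta\in\mathbb{R}$ define $\mathcal R_\theta^*f(z,t)=f(e^{i\theta}z,t)$. Then for $f\in C_c^\infty(\overline{\mathbb{H}})$ and $(z,t)\in\overline{\mathbb{H}}$, $$I_r(\mathcal R_\theta^*f)(z,t)=(I_rf)\big(e^{i\theta}z,\ t-\tfrac12 r\theta\big),$$ and consequently $$I_r(\partial_\theta f)(z,t)=\big(\partial_\theta-\tfrac12 rT\big)I_rf(z,t).$$
   Context: $\mathbb{H}=\mathbb{C}\times\mathbb{R}$ (coordinates $z=x+iy$, $t$) with product $(x+iy,t)(u+iv,s)=(x+u+i(y+v),\,t+s+\tfrac12(xv-yu))$; $\overline{\mathbb{H}}=\mathbb{H}/\{(0,k\pi):k\in\mathbb{Z}\}\cong\mathbb{C}\times(\mathbb{R}/\pi\mathbb{Z})$. For $r=a/b$, $\gamma_r(s)=(\sqrt r e^{is/\sqrt r},\tfrac12\sqrt r s)$ and $I_rf(z,t)=\int_0^{2\pi\sqrt{ab}}f((z,t)\gamma_r(s))\,ds$. $T=\partial_t$, and $\partial_\theta=x\partial_y-y\partial_x$ is the rotational derivative in the $z$ variable, i.e. $\partial_\theta f=\frac{d}{d\theta}\big|_{\theta=0}\mathcal R^*_\theta f$. *)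

From Stdlib Require Import Reals.
From Coquelicot Require Import Coquelicot.
Open Scope R_scope.

(* A function on the Heisenberg group H = C x R, written in real coordinates
   (x, y, t) with z = x + i y. *)
Definition HFun := R -> R -> R -> C.

Definition hmul (p q : R * R * R) : R * R * R :=
  let '(x, y, t) := p in let '(u, v, s) := q in
  (x + u, y + v, t + s + / 2 * (x * v - y * u)).

Definition gamma (r s : R) : R * R * R :=
  (sqrt r * cos (s / sqrt r), sqrt r * sin (s / sqrt r), / 2 * sqrt r * s).

Definition evalH (f : HFun) (p : R * R * R) : C :=
  let '(x, y, t) := p in f x y t.

Definition ratio (a b : nat) : R := INR a / INR b.

Definition Ir (a b : nat) (f : HFun) : HFun := fun x y t =>
  RInt (V := C_R_CompleteNormedModule)
    (fun s => evalH f (hmul (x, y, t) (gamma (ratio a b) s)))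
    0 (2 * PI * sqrt (INR a * INR b)).

Definition rotx (th x y : R) : R := cos th * x - sin th * y.
Definition roty (th x y : R) : R := sin th * x + cos th * y.

Definition Rot (th : R) (f : HFun) : HFun := fun x y t => f (rotx th x y) (roty th x y) t.

Definition cont3 (f : HFun) : Prop :=
  forall x y t, continuous (fun p : R * R * R => evalH f p) (x, y, t).

Fixpoint Ck (k : nat) (f : HFun) : Prop :=
  cont3 f /\
  match k with
  | O => True
  | S m => exists fx fy ft : HFun,
      (forall x y t, is_derive (K := R_AbsRing) (V := C_R_NormedModule)
                       (fun u => f u y t) x (fx x y t)) /\
      (forall x y t, is_derive (K := R_AbsRing) (V := C_R_NormedModule)
                       (fun v => f x v t) y (fy x y t)) /\
      (forall x y t, is_derive (K := R_AbsRing) (V := C_R_NormedModule)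
                       (fun s => f x y s) t (ft x y t)) /\
      Ck m fx /\ Ck m fy /\ Ck m ft
  end.

Definition smooth (f : HFun) : Prop := forall k, Ck k f.

(* f descends to the reduced Heisenberg group Hbar = H / {(0, k pi)},
   i.e. is pi-periodic in t. *)
Definition periodic_t (f : HFun) : Prop := forall x y t, f x y (t + PI) = f x y t.

(* Compact support on Hbar = C x (R / pi Z): the support is bounded in z. *)
Definition bounded_z_support (f : HFun) : Prop :=
  exists M : R, forall x y t, M < x ^ 2 + y ^ 2 -> f x y t = 0.

Definition Cc_infty_Hbar (f : HFun) : Prop :=
  smooth f /\ periodic_t f /\ bounded_z_support f.

(* Rotation by [th] is a group automorphism of H fixing the centre, and it maps [gamma_r(s)]
   to [gamma_r(s + sqrt r th)] times the central element [(0, - r th / 2)].  Hence the orbit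
   integrand of [R_th^* f] based at [(z, t)] is the orbit integrand of [f] based at
   [(e^{i th} z, t - r th / 2)], run [sqrt r th] further.  Since [f] is [pi]-periodic in [t]
   and [L = 2 pi sqrt(ab)] satisfies [L / sqrt r = 2 pi b] and [sqrt r L / 2 = pi a], the orbit
   integrand is [L]-periodic in [s], so the time shift does not change [I_r].
   For the second identity, the chain rule applied to the same computation writes [d_theta f]
   along the orbit as its [th]-derivative, minus [r/2] times its [t]-derivative, plus [sqrt r]
   times its [s]-derivative.  Integrating over [0, L], the first two terms give
   [d_theta I_r f] and [T I_r f] (differentiation under the integral sign, justified by uniform
   continuity on [0, L]) and the last one vanishes by periodicity. *)

From Stdlib Require Import Reals Lra ClassicalEpsilon.
From Coquelicot Require Import Coquelicot.
Open Scope R_scope.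

Notation is_derive_C g x l := (is_derive (K := R_AbsRing) (V := C_R_NormedModule) g x l).
Notation RInt_C g a b := (RInt (V := C_R_CompleteNormedModule) g a b).

(** * Complex-valued functions of a real variable *)

Lemma is_derive_locally {V : NormedModule R_AbsRing} (g : R -> V) x l :
  is_derive g x l <->
  forall eps : posreal,
    locally x (fun y => norm (minus (minus (g y) (g x)) (scal (y - x) l)) <= eps * Rabs (y - x)).
Proof.
  split.
  - intros [_ Hd]. exact (Hd x (fun P H => H)).
  - intros H. split; [apply is_linear_scal_l |].
    intros x0 Hx0. apply (@is_filter_lim_locally_unique R_AbsRing R_NormedModule) in Hx0.
    subst x0. exact H.
Qed.

Lemma is_derive_C_locally (g : R -> C) x l :
  is_derive_C g x l <->
  forall eps : posreal,
    locally x (fun y => Cmod (g y - g x - RtoC (y - x) * l)%C <= eps * Rabs (y - x)).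
Proof.
  rewrite is_derive_locally.
  split; intros H eps; generalize (H eps); apply filter_imp; intros y Hy.
  - rewrite Cmod_norm, <- scal_R_Cmult. exact Hy.
  - rewrite scal_R_Cmult, <- Cmod_norm. exact Hy.
Qed.

Lemma is_derive_near (p : R -> R) x d (e del : posreal) : is_derive p x d ->
  locally x (fun y => Rabs (p y - p x - (y - x) * d) <= e * Rabs (y - x) /\ Rabs (p y - p x) < del).
Proof.
  intros Dp. apply filter_and.
  - exact (proj1 (is_derive_locally _ _ _) Dp e).
  - exact (proj1 (filterlim_locally _ _) (ex_derive_continuous p x (ex_intro _ d Dp)) del).
Qed.

Lemma is_derive_C_fst (g : R -> C) x l :
  is_derive_C g x l -> is_derive (fun u => fst (g u)) x (fst l).
Proof.
  intros Hg. eapply filterdiff_ext_lin.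
  - exact (filterdiff_comp' g fst x _ _ Hg (filterdiff_linear _ is_linear_fst)).
  - reflexivity.
Qed.

Lemma is_derive_C_snd (g : R -> C) x l :
  is_derive_C g x l -> is_derive (fun u => snd (g u)) x (snd l).
Proof.
  intros Hg. eapply filterdiff_ext_lin.
  - exact (filterdiff_comp' g snd x _ _ Hg (filterdiff_linear _ is_linear_snd)).
  - reflexivity.
Qed.

Lemma is_derive_C_unique (g : R -> C) x l1 l2 :
  is_derive_C g x l1 -> is_derive_C g x l2 -> l1 = l2.
Proof.
  intros H1 H2. apply injective_projections.
  - rewrite <- (is_derive_unique _ _ _ (is_derive_C_fst _ _ _ H1)).
    exact (is_derive_unique _ _ _ (is_derive_C_fst _ _ _ H2)).
  - rewrite <- (is_derive_unique _ _ _ (is_derive_C_snd _ _ _ H1)).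
    exact (is_derive_unique _ _ _ (is_derive_C_snd _ _ _ H2)).
Qed.

Lemma Cmod_increment_le (g g' : R -> C) a b l eps :
  (forall u, is_derive_C g u (g' u)) -> (forall u, continuous g' u) ->
  (forall u, Rabs (u - a) <= Rabs (b - a) -> Cmod (g' u - l)%C <= eps) ->
  Cmod (g b - g a - RtoC (b - a) * l)%C <= Rabs (b - a) * eps.
Proof.
  intros Hd Hc Hb.
  assert (HI := is_RInt_minus _ _ _ _ _ _
    (is_RInt_derive (V := C_R_CompleteNormedModule) g g' a b (fun u _ => Hd u) (fun u _ => Hc u))
    (is_RInt_const a b l)).
  rewrite Cmod_norm, <- scal_R_Cmult.
  refine (norm_RInt_le_const_abs _ _ _ _ _ _ HI).
  intros u Hu. rewrite <- Cmod_norm. apply Hb.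
  rewrite Rmin_comm, Rmax_comm in Hu. exact (Rabs_le_between_min_max _ _ _ Hu).
Qed.

Lemma continuous_C_near {T : UniformSpace} (G : T -> C) z :
  continuous G z -> forall eps, 0 < eps -> locally z (fun w => Cmod (G w - G z)%C < eps).
Proof.
  intros HG eps He.
  generalize (proj1 (filterlim_locally_ball_norm (K := R_AbsRing) (U := C_R_NormedModule) G (G z))
    HG (mkposreal eps He)).
  apply filter_imp. intros w Hw. rewrite Cmod_norm. exact Hw.
Qed.

Lemma cont3_near (g : HFun) x y t : cont3 g -> forall eps, 0 < eps ->
  exists del, 0 < del /\ forall u v w, Rabs (u - x) < del -> Rabs (v - y) < del ->
    Rabs (w - t) < del -> Cmod (g u v w - g x y t)%C < eps.
Proof.
  intros Hg eps He. destruct (continuous_C_near _ _ (Hg x y t) eps He) as [del Hdel].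
  exists del. split; [apply cond_pos |].
  intros u v w Hu Hv Hw. exact (Hdel (u, v, w) (conj (conj Hu Hv) Hw)).
Qed.

Lemma continuous_pair {T U V : UniformSpace} (g : T -> U) (h : T -> V) z :
  continuous g z -> continuous h z -> continuous (fun w => (g w, h w)) z.
Proof.
  intros Hg Hh. apply filterlim_locally. intros eps.
  generalize (filter_and _ _ (proj1 (filterlim_locally _ _) Hg eps)
                             (proj1 (filterlim_locally _ _) Hh eps)).
  apply filter_imp. intros w [H1 H2]. split; assumption.
Qed.

Lemma cont3_comp {T : UniformSpace} (g : HFun) (p1 p2 p3 : T -> R) z :
  cont3 g -> continuous p1 z -> continuous p2 z -> continuous p3 z ->
  continuous (fun w => g (p1 w) (p2 w) (p3 w)) z.
Proof.
  intros Hg H1 H2 H3.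
  exact (continuous_comp _ (evalH g) z (continuous_pair _ _ z (continuous_pair _ _ z H1 H2) H3)
    (Hg (p1 z) (p2 z) (p3 z))).
Qed.

Lemma continuous_Rplus {T : UniformSpace} (g h : T -> R) z :
  continuous g z -> continuous h z -> continuous (fun w => g w + h w) z.
Proof. exact (continuous_plus (V := R_NormedModule) g h z). Qed.

Lemma continuous_Rmult {T : UniformSpace} (g h : T -> R) z :
  continuous g z -> continuous h z -> continuous (fun w => g w * h w) z.
Proof. exact (continuous_mult (K := R_AbsRing) g h z). Qed.

Lemma continuous_Ropp {T : UniformSpace} (g : T -> R) z :
  continuous g z -> continuous (fun w => - g w) z.
Proof. exact (continuous_opp (V := R_NormedModule) g z). Qed.

Lemma continuous_cos_fun {T : UniformSpace} (g : T -> R) z :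
  continuous g z -> continuous (fun w => cos (g w)) z.
Proof. intros Hg. exact (continuous_comp g cos z Hg (continuous_cos _)). Qed.

Lemma continuous_sin_fun {T : UniformSpace} (g : T -> R) z :
  continuous g z -> continuous (fun w => sin (g w)) z.
Proof. intros Hg. exact (continuous_comp g sin z Hg (continuous_sin _)). Qed.

Ltac solve_continuous := solve [
  unfold Rdiv, Rminus;
  repeat match goal with
  | |- continuous (fun w => @?g w + @?h w) _ => apply (continuous_Rplus g h)
  | |- continuous (fun w => @?g w * @?h w) _ => apply (continuous_Rmult g h)
  | |- continuous (fun w => - @?g w) _ => apply (continuous_Ropp g)
  | |- continuous (fun w => cos (@?g w)) _ => apply (continuous_cos_fun g)
  | |- continuous (fun w => sin (@?g w)) _ => apply (continuous_sin_fun g)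
  | |- continuous (fun w => fst w) _ => apply continuous_fst
  | |- continuous (fun w => snd w) _ => apply continuous_snd
  | |- continuous (fun w => w) _ => apply continuous_id
  | |- continuous (fun _ => _) _ => apply continuous_const
  end ].

(** * Integrals of complex-valued functions *)

Definition continuous2 {V : UniformSpace} (G : R -> R -> V) : Prop :=
  forall z : R * R, continuous (fun p => G (fst p) (snd p)) z.

Lemma continuous2_fst {V : UniformSpace} (G : R -> R -> V) th s :
  continuous2 G -> continuous (fun u => G u s) th.
Proof.
  intros HG. apply (continuous_comp (fun u => (u, s)) (fun p => G (fst p) (snd p))).
  - apply continuous_pair; [apply continuous_id | apply continuous_const].
  - apply HG.
Qed.

Lemma continuous2_snd {V : UniformSpace} (G : R -> R -> V) th s :
  continuous2 G -> continuous (G th) s.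
Proof.
  intros HG. apply (continuous_comp (fun v => (th, v)) (fun p => G (fst p) (snd p))).
  - apply continuous_pair; [apply continuous_const | apply continuous_id].
  - apply HG.
Qed.

Lemma ex_RInt_C_continuous (g : R -> C) a b :
  (forall s, continuous g s) -> ex_RInt (V := C_R_CompleteNormedModule) g a b.
Proof. intros Hg. apply ex_RInt_continuous. intros s _. apply Hg. Qed.

(* Compactness of [a, b] turns the pointwise moduli of continuity in [s] into a uniform one. *)
Lemma continuous2_uniform_near (K : R -> R -> C) a b th0 : continuous2 K ->
  forall eps, 0 < eps -> exists del, 0 < del /\ forall u s, Rabs (u - th0) < del ->
    Rmin a b <= s <= Rmax a b -> Cmod (K u s - K th0 s)%C <= eps.
Proof.
  intros HK eps He.
  assert (Hmod : forall s, exists d : posreal, forall u v,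
    Rabs (u - th0) < d -> Rabs (v - s) < d -> Cmod (K u v - K th0 s)%C < eps / 2).
  { intros s. destruct (continuous_C_near _ _ (HK (th0, s)) (eps / 2) ltac:(lra)) as [d Hd].
    exists d. intros u v Hu Hv. exact (Hd (u, v) (conj Hu Hv)). }
  set (delta s := proj1_sig (constructive_indefinite_description _ (Hmod s))).
  assert (Hdelta : forall s u v, Rabs (u - th0) < delta s -> Rabs (v - s) < delta s ->
    Cmod (K u v - K th0 s)%C < eps / 2).
  { intros s. unfold delta. destruct (constructive_indefinite_description _ (Hmod s)) as [d Hd].
    exact Hd. }
  destruct (compactness_value_1d (Rmin a b) (Rmax a b) delta) as [d Hc].
  exists d. split; [apply cond_pos |].
  intros u s Hu Hs. apply Rnot_lt_le. intros Hlt. apply (Hc s Hs).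
  intros [s' [_ [Hss' Hd]]].
  assert (X1 := Hdelta s' u s ltac:(lra) Hss').
  assert (X2 := Hdelta s' th0 s ltac:(rewrite Rminus_diag, Rabs_R0; apply cond_pos) Hss').
  pose proof (Cmod_triangle (K u s - K th0 s')%C (- (K th0 s - K th0 s'))%C) as Htri.
  rewrite Cmod_opp in Htri.
  replace (K u s - K th0 s' + - (K th0 s - K th0 s'))%C with (K u s - K th0 s)%C in Htri by ring.
  lra.
Qed.

Lemma is_derive_RInt_param_C (k K : R -> R -> C) a b th0 :
  (forall th s, is_derive_C (fun u => k u s) th (K th s)) ->
  continuous2 K -> (forall th s, continuous (k th) s) ->
  is_derive_C (fun th => RInt_C (k th) a b) th0 (RInt_C (K th0) a b).
Proof.
  intros Hd HK Hk. apply is_derive_C_locally. intros eps.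
  set (e := eps / (Rabs (b - a) + 1)).
  pose proof (Rabs_pos (b - a)). pose proof (cond_pos eps).
  assert (He : 0 < e) by (apply Rdiv_lt_0_compat; lra).
  destruct (continuous2_uniform_near K a b th0 HK e He) as [del [Hdel Hunif]].
  exists (mkposreal del Hdel). intros y Hy. change (Rabs (y - th0) < del) in Hy.
  assert (I1 := RInt_correct _ _ _ (ex_RInt_C_continuous (k y) a b (Hk y))).
  assert (I2 := RInt_correct _ _ _ (ex_RInt_C_continuous (k th0) a b (Hk th0))).
  assert (I3 := RInt_correct _ _ _
    (ex_RInt_C_continuous (K th0) a b (fun s => continuous2_snd K th0 s HK))).
  assert (HI := is_RInt_minus _ _ _ _ _ _ (is_RInt_minus _ _ _ _ _ _ I1 I2)
                  (is_RInt_scal _ _ _ (y - th0) _ I3)).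
  rewrite Cmod_norm, <- scal_R_Cmult.
  apply Rle_trans with (Rabs (b - a) * (Rabs (y - th0) * e)).
  - refine (norm_RInt_le_const_abs _ _ _ _ _ _ HI). intros s Hs.
    rewrite scal_R_Cmult, <- Cmod_norm.
    apply (Cmod_increment_le (fun u => k u s) (fun u => K u s)).
    + intros u. apply Hd.
    + intros u. apply continuous2_fst, HK.
    + intros u Hu. apply Hunif; [lra | exact Hs].
  - pose proof (Rabs_pos (y - th0)).
    replace (Rabs (b - a) * (Rabs (y - th0) * e)) with (Rabs (b - a) * e * Rabs (y - th0)) by ring.
    apply Rmult_le_compat_r; [lra |].
    unfold e. apply Rle_trans with ((Rabs (b - a) + 1) * (eps / (Rabs (b - a) + 1))).
    + apply Rmult_le_compat_r; [apply Rlt_le, He | lra].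
    + right. field. lra.
Qed.

Lemma RInt_C_shift (g : R -> C) c a b : (forall s, continuous g s) ->
  RInt_C (fun s => g (s + c)) a b = RInt_C g (a + c) (b + c).
Proof.
  intros Hg.
  rewrite <- (Rmult_1_l a), <- (Rmult_1_l b), <- RInt_comp_lin by (apply ex_RInt_C_continuous, Hg).
  rewrite !Rmult_1_l. apply RInt_ext. intros s _.
  rewrite Rmult_1_l. symmetry. apply (scal_one (K := R_Ring)).
Qed.

Lemma RInt_C_periodic_shift (g : R -> C) L c :
  (forall s, continuous g s) -> (forall s, g (s + L) = g s) ->
  RInt_C (fun s => g (s + c)) 0 L = RInt_C g 0 L.
Proof.
  intros Hg Hp. assert (Hint := fun u v => ex_RInt_C_continuous g u v Hg).
  rewrite RInt_C_shift, Rplus_0_l by exact Hg.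
  rewrite <- (RInt_Chasles (V := C_R_CompleteNormedModule) g c L (L + c)),
    <- (RInt_Chasles (V := C_R_CompleteNormedModule) g c 0 L) by apply Hint.
  replace (RInt_C g L (L + c)) with (RInt_C g 0 c).
  2:{ rewrite <- (Rplus_0_l L) at 1. rewrite (Rplus_comm L c), <- RInt_C_shift by exact Hg.
      apply RInt_ext. intros s _. symmetry. apply Hp. }
  rewrite <- (opp_RInt_swap (V := C_R_CompleteNormedModule) g) by apply Hint.
  set (X := RInt_C g 0 c). set (Y := RInt_C g 0 L).
  change ((- X + Y) + X = Y)%C. ring.
Qed.

Lemma RInt_C_lincomb (A B E : R -> C) k l a b :
  ex_RInt (V := C_R_CompleteNormedModule) A a b -> ex_RInt (V := C_R_CompleteNormedModule) B a b ->
  ex_RInt (V := C_R_CompleteNormedModule) E a b ->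
  RInt_C (fun s => A s - RtoC k * B s + RtoC l * E s)%C a b =
  (RInt_C A a b - RtoC k * RInt_C B a b + RtoC l * RInt_C E a b)%C.
Proof.
  intros IA IB IE. apply is_RInt_unique.
  assert (H := is_RInt_plus _ _ _ _ _ _
    (is_RInt_minus _ _ _ _ _ _ (RInt_correct _ _ _ IA)
                               (is_RInt_scal _ _ _ k _ (RInt_correct _ _ _ IB)))
    (is_RInt_scal _ _ _ l _ (RInt_correct _ _ _ IE))).
  rewrite !scal_R_Cmult in H. revert H. apply is_RInt_ext.
  intros s _. rewrite !scal_R_Cmult. reflexivity.
Qed.

(** * Chain rule for [C^1] functions of three real variables *)

Definition differential3 (fx fy ft : HFun) (p1 p2 p3 d1 d2 d3 : R) : C :=
  (RtoC d1 * fx p1 p2 p3 + RtoC d2 * fy p1 p2 p3 + RtoC d3 * ft p1 p2 p3)%C.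

Lemma Cmod_differential3_le fx fy ft p1 p2 p3 d1 d2 d3 :
  Cmod (differential3 fx fy ft p1 p2 p3 d1 d2 d3) <=
  Rabs d1 * Cmod (fx p1 p2 p3) + Rabs d2 * Cmod (fy p1 p2 p3) + Rabs d3 * Cmod (ft p1 p2 p3).
Proof.
  unfold differential3.
  eapply Rle_trans; [apply Cmod_triangle |].
  rewrite !Cmod_mult, !Cmod_R.
  pose proof (Cmod_triangle (RtoC d1 * fx p1 p2 p3) (RtoC d2 * fy p1 p2 p3)) as H.
  rewrite !Cmod_mult, !Cmod_R in H. lra.
Qed.

Lemma continuous_differential3 {T : UniformSpace} fx fy ft (p1 p2 p3 d1 d2 d3 : T -> R) z :
  cont3 fx -> cont3 fy -> cont3 ft ->
  continuous p1 z -> continuous p2 z -> continuous p3 z ->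
  continuous d1 z -> continuous d2 z -> continuous d3 z ->
  continuous (fun w => differential3 fx fy ft (p1 w) (p2 w) (p3 w) (d1 w) (d2 w) (d3 w)) z.
Proof.
  intros Cx Cy Ct H1 H2 H3 D1 D2 D3.
  assert (Hterm : forall (d : T -> R) (g : HFun), cont3 g -> continuous d z ->
    continuous (fun w => RtoC (d w) * g (p1 w) (p2 w) (p3 w))%C z).
  { intros d g Hg Hd.
    apply (continuous_ext (fun w => scal (d w) (g (p1 w) (p2 w) (p3 w)))).
    - intros w. apply scal_R_Cmult.
    - apply (continuous_scal (V := C_R_NormedModule)); [exact Hd | apply cont3_comp; assumption]. }
  unfold differential3.
  apply (continuous_plus (V := C_R_NormedModule));
    [apply (continuous_plus (V := C_R_NormedModule)) |]; apply Hterm; assumption.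
Qed.

Lemma differential3_lincomb fx fy ft p1 p2 p3 a1 a2 a3 b1 b2 b3 e1 e2 e3 k l :
  (differential3 fx fy ft p1 p2 p3 a1 a2 a3 - RtoC k * differential3 fx fy ft p1 p2 p3 b1 b2 b3
   + RtoC l * differential3 fx fy ft p1 p2 p3 e1 e2 e3)%C =
  differential3 fx fy ft p1 p2 p3
    (a1 - k * b1 + l * e1) (a2 - k * b2 + l * e2) (a3 - k * b3 + l * e3).
Proof. unfold differential3. rewrite !RtoC_plus, !RtoC_minus, !RtoC_mult. ring. Qed.

Section C1Function.

Variables f fx fy ft : HFun.
Hypothesis f_x : forall x y t, is_derive_C (fun u => f u y t) x (fx x y t).
Hypothesis f_y : forall x y t, is_derive_C (fun v => f x v t) y (fy x y t).
Hypothesis f_t : forall x y t, is_derive_C (fun s => f x y s) t (ft x y t).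
Hypothesis fx_cont : cont3 fx.
Hypothesis fy_cont : cont3 fy.
Hypothesis ft_cont : cont3 ft.

Lemma C1_first_order_estimate q1 q2 q3 eps : 0 < eps ->
  exists del, 0 < del /\ forall p1 p2 p3,
    Rabs (p1 - q1) < del -> Rabs (p2 - q2) < del -> Rabs (p3 - q3) < del ->
    Cmod (f p1 p2 p3 - f q1 q2 q3 - differential3 fx fy ft q1 q2 q3 (p1 - q1) (p2 - q2) (p3 - q3))%C
      <= eps * (Rabs (p1 - q1) + Rabs (p2 - q2) + Rabs (p3 - q3)).
Proof.
  intros He.
  destruct (cont3_near fx q1 q2 q3 fx_cont eps He) as [d1 [Hd1 N1]].
  destruct (cont3_near fy q1 q2 q3 fy_cont eps He) as [d2 [Hd2 N2]].
  destruct (cont3_near ft q1 q2 q3 ft_cont eps He) as [d3 [Hd3 N3]].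
  exists (Rmin d1 (Rmin d2 d3)). split; [repeat apply Rmin_pos; assumption |].
  intros p1 p2 p3 H1 H2 H3.
  pose proof (Rmin_l d1 (Rmin d2 d3)). pose proof (Rmin_r d1 (Rmin d2 d3)).
  pose proof (Rmin_l d2 d3). pose proof (Rmin_r d2 d3).
  assert (Hq : forall q, Rabs (q - q) = 0) by (intros; rewrite Rminus_diag; apply Rabs_R0).
  assert (A1 : Cmod (f p1 p2 p3 - f q1 p2 p3 - RtoC (p1 - q1) * fx q1 q2 q3)%C
                <= Rabs (p1 - q1) * eps).
  { apply (Cmod_increment_le (fun u => f u p2 p3) (fun u => fx u p2 p3)).
    - intros u. apply f_x.
    - intros u. apply (cont3_comp fx (fun u => u) (fun _ => p2) (fun _ => p3));
        auto using continuous_id, continuous_const.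
    - intros u Hu. apply Rlt_le, N1; lra. }
  assert (A2 : Cmod (f q1 p2 p3 - f q1 q2 p3 - RtoC (p2 - q2) * fy q1 q2 q3)%C
                <= Rabs (p2 - q2) * eps).
  { apply (Cmod_increment_le (fun v => f q1 v p3) (fun v => fy q1 v p3)).
    - intros v. apply f_y.
    - intros v. apply (cont3_comp fy (fun _ => q1) (fun v => v) (fun _ => p3));
        auto using continuous_id, continuous_const.
    - intros v Hv. pose proof (Hq q1). apply Rlt_le, N2; lra. }
  assert (A3 : Cmod (f q1 q2 p3 - f q1 q2 q3 - RtoC (p3 - q3) * ft q1 q2 q3)%C
                <= Rabs (p3 - q3) * eps).
  { apply (Cmod_increment_le (fun w => f q1 q2 w) (fun w => ft q1 q2 w)).
    - intros w. apply f_t.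
    - intros w. apply (cont3_comp ft (fun _ => q1) (fun _ => q2) (fun w => w));
        auto using continuous_id, continuous_const.
    - intros w Hw. pose proof (Hq q1). pose proof (Hq q2).
      apply Rlt_le, N3; lra. }
  match goal with |- Cmod ?X <= _ =>
    replace X with ((f p1 p2 p3 - f q1 p2 p3 - RtoC (p1 - q1) * fx q1 q2 q3)
                  + (f q1 p2 p3 - f q1 q2 p3 - RtoC (p2 - q2) * fy q1 q2 q3)
                  + (f q1 q2 p3 - f q1 q2 q3 - RtoC (p3 - q3) * ft q1 q2 q3))%C
      by (unfold differential3; ring) end.
  eapply Rle_trans; [apply Cmod_triangle |].
  pose proof (Cmod_triangle (f p1 p2 p3 - f q1 p2 p3 - RtoC (p1 - q1) * fx q1 q2 q3)%C
                            (f q1 p2 p3 - f q1 q2 p3 - RtoC (p2 - q2) * fy q1 q2 q3)%C).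
  lra.
Qed.

Lemma C1_comp3_first_order (p1 p2 p3 : R -> R) d1 d2 d3 th0 (e : posreal) :
  is_derive p1 th0 d1 -> is_derive p2 th0 d2 -> is_derive p3 th0 d3 ->
  locally th0 (fun y =>
    Cmod (f (p1 y) (p2 y) (p3 y) - f (p1 th0) (p2 th0) (p3 th0)
          - differential3 fx fy ft (p1 th0) (p2 th0) (p3 th0)
              (p1 y - p1 th0) (p2 y - p2 th0) (p3 y - p3 th0))%C
    <= e * ((Rabs d1 + Rabs d2 + Rabs d3 + 3) * Rabs (y - th0))).
Proof.
  intros D1 D2 D3.
  destruct (C1_first_order_estimate (p1 th0) (p2 th0) (p3 th0) e (cond_pos e)) as [del [Hdel Hfo]].
  set (one := mkposreal 1 Rlt_0_1). set (del' := mkposreal del Hdel).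
  generalize (filter_and _ _ (is_derive_near _ _ _ one del' D1)
    (filter_and _ _ (is_derive_near _ _ _ one del' D2) (is_derive_near _ _ _ one del' D3))).
  apply filter_imp. intros y [[B1 N1] [[B2 N2] [B3 N3]]]. simpl in B1, B2, B3.
  assert (Lip : forall p q d, Rabs (p - q - (y - th0) * d) <= 1 * Rabs (y - th0) ->
                  Rabs (p - q) <= (Rabs d + 1) * Rabs (y - th0)).
  { intros p q d Hb. replace (p - q) with ((p - q - (y - th0) * d) + (y - th0) * d) by ring.
    eapply Rle_trans; [apply Rabs_triang |]. rewrite Rabs_mult. lra. }
  pose proof (Lip _ _ _ B1). pose proof (Lip _ _ _ B2). pose proof (Lip _ _ _ B3).
  eapply Rle_trans; [exact (Hfo _ _ _ N1 N2 N3) |].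
  apply Rmult_le_compat_l; [apply Rlt_le, cond_pos | lra].
Qed.

Lemma is_derive_C1_comp3 (p1 p2 p3 : R -> R) d1 d2 d3 th0 :
  is_derive p1 th0 d1 -> is_derive p2 th0 d2 -> is_derive p3 th0 d3 ->
  is_derive_C (fun th => f (p1 th) (p2 th) (p3 th)) th0
    (differential3 fx fy ft (p1 th0) (p2 th0) (p3 th0) d1 d2 d3).
Proof.
  intros D1 D2 D3. apply is_derive_C_locally. intros eps.
  set (q1 := p1 th0). set (q2 := p2 th0). set (q3 := p3 th0).
  set (S := Rabs d1 + Rabs d2 + Rabs d3 + 3).
  set (M := Cmod (fx q1 q2 q3) + Cmod (fy q1 q2 q3) + Cmod (ft q1 q2 q3)).
  assert (HSM : 0 < S + M).
  { unfold S, M. pose proof (Rabs_pos d1). pose proof (Rabs_pos d2). pose proof (Rabs_pos d3).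
    pose proof (Cmod_ge_0 (fx q1 q2 q3)). pose proof (Cmod_ge_0 (fy q1 q2 q3)).
    pose proof (Cmod_ge_0 (ft q1 q2 q3)). lra. }
  set (e := mkposreal _ (Rdiv_lt_0_compat _ _ (cond_pos eps) HSM)).
  generalize (filter_and _ _ (C1_comp3_first_order _ _ _ _ _ _ th0 e D1 D2 D3)
    (filter_and _ _ (proj1 (is_derive_locally _ _ _) D1 e)
      (filter_and _ _ (proj1 (is_derive_locally _ _ _) D2 e)
                      (proj1 (is_derive_locally _ _ _) D3 e)))).
  apply filter_imp. intros y [Hfirst [B1 [B2 B3]]].
  fold q1 q2 q3 S in Hfirst. set (h := y - th0) in *.
  change (Rabs (p1 y - q1 - h * d1) <= e * Rabs h) in B1.
  change (Rabs (p2 y - q2 - h * d2) <= e * Rabs h) in B2.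
  change (Rabs (p3 y - q3 - h * d3) <= e * Rabs h) in B3.
  pose proof (Cmod_differential3_le fx fy ft q1 q2 q3
                (p1 y - q1 - h * d1) (p2 y - q2 - h * d2) (p3 y - q3 - h * d3)) as Hrest.
  match goal with |- Cmod ?X <= _ =>
    replace X with ((f (p1 y) (p2 y) (p3 y) - f q1 q2 q3
                      - differential3 fx fy ft q1 q2 q3 (p1 y - q1) (p2 y - q2) (p3 y - q3))
                    + differential3 fx fy ft q1 q2 q3
                        (p1 y - q1 - h * d1) (p2 y - q2 - h * d2) (p3 y - q3 - h * d3))%C
      by (unfold differential3; rewrite !RtoC_minus, !RtoC_mult; ring) end.
  eapply Rle_trans; [apply Cmod_triangle |].
  assert (Rabs (p1 y - q1 - h * d1) * Cmod (fx q1 q2 q3) <= e * Rabs h * Cmod (fx q1 q2 q3))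
    by (apply Rmult_le_compat_r; [apply Cmod_ge_0 | assumption]).
  assert (Rabs (p2 y - q2 - h * d2) * Cmod (fy q1 q2 q3) <= e * Rabs h * Cmod (fy q1 q2 q3))
    by (apply Rmult_le_compat_r; [apply Cmod_ge_0 | assumption]).
  assert (Rabs (p3 y - q3 - h * d3) * Cmod (ft q1 q2 q3) <= e * Rabs h * Cmod (ft q1 q2 q3))
    by (apply Rmult_le_compat_r; [apply Cmod_ge_0 | assumption]).
  assert (HeSM : e * (S + M) = eps) by (simpl; field; lra).
  assert (e * (S * Rabs h) + e * Rabs h * M = eps * Rabs h) by (rewrite <- HeSM; ring).
  unfold M in *. lra.
Qed.

Hypothesis f_cont : cont3 f.

Lemma is_derive_RInt_C1_comp3 (P1 P2 P3 D1 D2 D3 : R -> R -> R) a b th0 :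
  (forall th s, is_derive (fun u => P1 u s) th (D1 th s)) ->
  (forall th s, is_derive (fun u => P2 u s) th (D2 th s)) ->
  (forall th s, is_derive (fun u => P3 u s) th (D3 th s)) ->
  continuous2 P1 -> continuous2 P2 -> continuous2 P3 ->
  continuous2 D1 -> continuous2 D2 -> continuous2 D3 ->
  is_derive_C (fun th => RInt_C (fun s => f (P1 th s) (P2 th s) (P3 th s)) a b) th0
    (RInt_C (fun s => differential3 fx fy ft (P1 th0 s) (P2 th0 s) (P3 th0 s)
                                     (D1 th0 s) (D2 th0 s) (D3 th0 s)) a b).
Proof.
  intros H1 H2 H3 C1 C2 C3 E1 E2 E3.
  apply (is_derive_RInt_param_C (fun th s => f (P1 th s) (P2 th s) (P3 th s))
           (fun th s => differential3 fx fy ft (P1 th s) (P2 th s) (P3 th s)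
                                         (D1 th s) (D2 th s) (D3 th s))).
  - intros th s.
    apply (is_derive_C1_comp3 (fun u => P1 u s) (fun u => P2 u s) (fun u => P3 u s)); auto.
  - intros z. apply continuous_differential3; auto.
  - intros th s. apply cont3_comp; [exact f_cont | ..]; apply continuous2_snd; assumption.
Qed.

End C1Function.

(** * Orbit integrals on the Heisenberg group *)

(* The coordinates of [(x + i y, t) gamma_r(s)]. *)
Definition orb_x r x s := x + sqrt r * cos (s / sqrt r).
Definition orb_y r y s := y + sqrt r * sin (s / sqrt r).
Definition orb_t r x y t s :=
  t + / 2 * sqrt r * s + / 2 * (x * (sqrt r * sin (s / sqrt r)) - y * (sqrt r * cos (s / sqrt r))).

Definition orbit_integrand (f : HFun) r x y t s : C :=
  f (orb_x r x s) (orb_y r y s) (orb_t r x y t s).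

Definition orbit_differential (fx fy ft : HFun) r x y t (d1 d2 d3 : R -> R) (s : R) : C :=
  differential3 fx fy ft (orb_x r x s) (orb_y r y s) (orb_t r x y t s) (d1 s) (d2 s) (d3 s).

Lemma Ir_orbit a b f x y t :
  Ir a b f x y t = RInt_C (orbit_integrand f (ratio a b) x y t) 0 (2 * PI * sqrt (INR a * INR b)).
Proof. reflexivity. Qed.

Lemma continuous_orbit_integrand f r x y t s : cont3 f -> continuous (orbit_integrand f r x y t) s.
Proof.
  intros Hf. unfold orbit_integrand.
  apply (cont3_comp f (orb_x r x) (orb_y r y) (orb_t r x y t)); [exact Hf | ..];
    unfold orb_x, orb_y, orb_t; solve_continuous.
Qed.

Lemma periodic_t_INR (f : HFun) : periodic_t f ->
  forall n x y t, f x y (t + INR n * PI) = f x y t.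
Proof.
  intros Hp n. induction n as [|n IH]; intros x y t.
  - simpl. rewrite Rmult_0_l, Rplus_0_r. reflexivity.
  - rewrite S_INR, Rmult_plus_distr_r, Rmult_1_l, <- Rplus_assoc, Hp. apply IH.
Qed.

Lemma rotx_0 u v : rotx 0 u v = u.
Proof. unfold rotx. rewrite cos_0, sin_0. ring. Qed.

Lemma roty_0 u v : roty 0 u v = v.
Proof. unfold roty. rewrite cos_0, sin_0. ring. Qed.

Lemma is_derive_rotx th u v : is_derive (fun th => rotx th u v) th (- roty th u v).
Proof. unfold rotx, roty. auto_derive; [auto | ring]. Qed.

Lemma is_derive_roty th u v : is_derive (fun th => roty th u v) th (rotx th u v).
Proof. unfold rotx, roty. auto_derive; [auto | ring]. Qed.

Ltac solve_continuous2 :=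
  intros ?; cbv beta; unfold orb_x, orb_y, orb_t, rotx, roty; solve_continuous.

Section Heisenberg.

Variables a b : nat.
Hypothesis a_pos : (0 < a)%nat.
Hypothesis b_pos : (0 < b)%nat.

Local Notation r := (ratio a b).
Local Notation L := (2 * PI * sqrt (INR a * INR b)).

Lemma ratio_pos : 0 < r.
Proof. unfold ratio. apply Rdiv_lt_0_compat; apply lt_0_INR; assumption. Qed.

Lemma orbit_integrand_period f x y t s : periodic_t f ->
  orbit_integrand f r x y t (s + L) = orbit_integrand f r x y t s.
Proof.
  intros Hp. pose proof ratio_pos as Hr.
  assert (Hb : 0 < INR b) by (apply lt_0_INR; assumption).
  assert (Hsr : 0 < sqrt r) by (apply sqrt_lt_R0; exact Hr).
  assert (HL : sqrt (INR a * INR b) = sqrt r * INR b).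
  { replace (INR a * INR b) with (r * (INR b * INR b)) by (unfold ratio; field; lra).
    rewrite sqrt_mult, sqrt_square by nra. reflexivity. }
  assert (Ha : INR a = sqrt r * sqrt r * INR b)
    by (rewrite sqrt_sqrt by lra; unfold ratio; field; lra).
  unfold orbit_integrand, orb_x, orb_y, orb_t. rewrite HL.
  replace ((s + 2 * PI * (sqrt r * INR b)) / sqrt r) with (s / sqrt r + 2 * INR b * PI)
    by (field; lra).
  rewrite cos_period, sin_period.
  symmetry. rewrite <- (periodic_t_INR f Hp a). f_equal.
  replace (INR a * PI) with (sqrt r * sqrt r * INR b * PI) by (rewrite <- Ha; reflexivity).
  field.
Qed.

Lemma orbit_integrand_Rot f th x y t s :
  orbit_integrand (Rot th f) r x y t s =
  orbit_integrand f r (rotx th x y) (roty th x y) (t - / 2 * r * th) (s + sqrt r * th).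
Proof.
  pose proof ratio_pos as Hr. assert (Hsr : 0 < sqrt r) by (apply sqrt_lt_R0; exact Hr).
  unfold orbit_integrand, Rot, orb_x, orb_y, orb_t, rotx, roty.
  replace ((s + sqrt r * th) / sqrt r) with (s / sqrt r + th) by (field; lra).
  rewrite cos_plus, sin_plus.
  pose proof (sin2_cos2 th) as Hsc. unfold Rsqr in Hsc.
  replace (/ 2 * r * th) with (/ 2 * (sqrt r * sqrt r) * th) by (rewrite sqrt_sqrt; lra).
  f_equal; try ring.
  transitivity (t + / 2 * sqrt r * s
                + / 2 * (x * (sqrt r * sin (s / sqrt r)) - y * (sqrt r * cos (s / sqrt r)))
                  * (sin th * sin th + cos th * cos th)); [rewrite Hsc |]; ring.
Qed.

Lemma Ir_Rot f : cont3 f -> periodic_t f -> forall th x y t,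
  Ir a b (Rot th f) x y t = Ir a b f (rotx th x y) (roty th x y) (t - / 2 * r * th).
Proof.
  intros Hc Hp th x y t. rewrite !Ir_orbit.
  rewrite (RInt_ext (V := C_R_CompleteNormedModule) (orbit_integrand (Rot th f) r x y t)
             (fun s => orbit_integrand f r (rotx th x y) (roty th x y) (t - / 2 * r * th)
                                       (s + sqrt r * th))
             _ _ (fun s _ => orbit_integrand_Rot f th x y t s)).
  apply RInt_C_periodic_shift.
  - intros s. apply continuous_orbit_integrand, Hc.
  - intros s. apply orbit_integrand_period, Hp.
Qed.

Section Derivatives.

Variables f fx fy ft : HFun.
Hypothesis f_cont : cont3 f.
Hypothesis f_periodic : periodic_t f.
Hypothesis f_x : forall x y t, is_derive_C (fun u => f u y t) x (fx x y t).
Hypothesis f_y : forall x y t, is_derive_C (fun v => f x v t) y (fy x y t).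
Hypothesis f_t : forall x y t, is_derive_C (fun s => f x y s) t (ft x y t).
Hypothesis fx_cont : cont3 fx.
Hypothesis fy_cont : cont3 fy.
Hypothesis ft_cont : cont3 ft.

Local Notation od := (orbit_differential fx fy ft r).
Local Notation is_derive_RInt_f :=
  (is_derive_RInt_C1_comp3 f fx fy ft f_x f_y f_t fx_cont fy_cont ft_cont f_cont).

Lemma ex_RInt_orbit_differential x y t (d1 d2 d3 : R -> R) :
  (forall s, continuous d1 s) -> (forall s, continuous d2 s) -> (forall s, continuous d3 s) ->
  ex_RInt (V := C_R_CompleteNormedModule) (od x y t d1 d2 d3) 0 L.
Proof.
  intros H1 H2 H3. apply ex_RInt_C_continuous. intros s.
  apply continuous_differential3; auto; unfold orb_x, orb_y, orb_t; solve_continuous.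
Qed.

Lemma Rot_derivative_0 (dthf : HFun) :
  (forall x y t, is_derive_C (fun th => Rot th f x y t) 0 (dthf x y t)) ->
  forall x y t, dthf x y t = differential3 fx fy ft x y t (- y) x 0.
Proof.
  intros Hd x y t. apply (is_derive_C_unique (fun th => Rot th f x y t) 0); [apply Hd |].
  assert (H := is_derive_C1_comp3 f fx fy ft f_x f_y f_t fx_cont fy_cont ft_cont
    (fun th => rotx th x y) (fun th => roty th x y) (fun _ => t) _ _ 0 0
    (is_derive_rotx 0 x y) (is_derive_roty 0 x y) (is_derive_const t 0)).
  cbv beta in H. rewrite rotx_0, roty_0 in H. exact H.
Qed.

Lemma is_derive_Ir_t x y t :
  is_derive_C (fun tau => Ir a b f x y tau) t
    (RInt_C (od x y t (fun _ => 0) (fun _ => 0) (fun _ => 1)) 0 L).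
Proof.
  apply (is_derive_RInt_f (fun _ s => orb_x r x s) (fun _ s => orb_y r y s)
           (fun tau s => orb_t r x y tau s) (fun _ _ => 0) (fun _ _ => 0) (fun _ _ => 1));
    try solve_continuous2.
  all: intros; unfold orb_x, orb_y, orb_t; auto_derive; [auto | ring].
Qed.

Lemma is_derive_Ir_rot x y t :
  is_derive_C (fun th => Rot th (Ir a b f) x y t) 0
    (RInt_C (od x y t (fun _ => - y) (fun _ => x)
       (fun s => / 2 * (- y * (sqrt r * sin (s / sqrt r)) - x * (sqrt r * cos (s / sqrt r))))) 0 L).
Proof.
  assert (H := is_derive_RInt_f
    (fun th s => orb_x r (rotx th x y) s) (fun th s => orb_y r (roty th x y) s)
    (fun th s => orb_t r (rotx th x y) (roty th x y) t s)
    (fun th _ => - roty th x y) (fun th _ => rotx th x y)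
    (fun th s => / 2 * (- roty th x y * (sqrt r * sin (s / sqrt r))
                        - rotx th x y * (sqrt r * cos (s / sqrt r)))) 0 L 0
    ltac:(intros; unfold orb_x, rotx, roty; auto_derive; [auto | ring])
    ltac:(intros; unfold orb_y, rotx, roty; auto_derive; [auto | ring])
    ltac:(intros; unfold orb_t, rotx, roty; auto_derive; [auto | ring])
    ltac:(solve_continuous2) ltac:(solve_continuous2) ltac:(solve_continuous2)
    ltac:(solve_continuous2) ltac:(solve_continuous2) ltac:(solve_continuous2)).
  cbv beta in H. rewrite !rotx_0, !roty_0 in H. exact H.
Qed.

(* The integrand is the s-derivative of the orbit integrand; its integral vanishes because
   [c |-> int_0^L g (s + c) ds] is constant by periodicity. *)
Lemma RInt_orbit_differential_s x y t :
  RInt_C (od x y t (fun s => - sin (s / sqrt r)) (fun s => cos (s / sqrt r))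
    (fun s => / 2 * sqrt r + / 2 * (x * cos (s / sqrt r) + y * sin (s / sqrt r)))) 0 L = RtoC 0.
Proof.
  assert (Hsr : sqrt r <> 0) by (apply Rgt_not_eq, sqrt_lt_R0, ratio_pos).
  assert (H := is_derive_RInt_f
    (fun c s => orb_x r x (s + c)) (fun c s => orb_y r y (s + c)) (fun c s => orb_t r x y t (s + c))
    (fun c s => - sin ((s + c) / sqrt r)) (fun c s => cos ((s + c) / sqrt r))
    (fun c s => / 2 * sqrt r + / 2 * (x * cos ((s + c) / sqrt r) + y * sin ((s + c) / sqrt r)))
    0 L 0
    ltac:(intros; unfold orb_x; auto_derive; [auto | unfold Rdiv; field; exact Hsr])
    ltac:(intros; unfold orb_y; auto_derive; [auto | unfold Rdiv; field; exact Hsr])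
    ltac:(intros; unfold orb_t; auto_derive; [auto | unfold Rdiv; field; exact Hsr])
    ltac:(solve_continuous2) ltac:(solve_continuous2) ltac:(solve_continuous2)
    ltac:(solve_continuous2) ltac:(solve_continuous2) ltac:(solve_continuous2)).
  assert (Hconst : is_derive_C (fun c =>
    RInt_C (fun s => f (orb_x r x (s + c)) (orb_y r y (s + c)) (orb_t r x y t (s + c))) 0 L)
    0 (RtoC 0)).
  { apply (is_derive_ext (fun _ => RInt_C (orbit_integrand f r x y t) 0 L));
      [| exact (is_derive_const _ _)].
    intros c. symmetry. apply (RInt_C_periodic_shift (orbit_integrand f r x y t)).
    - intros s. apply continuous_orbit_integrand, f_cont.
    - intros s. apply orbit_integrand_period, f_periodic. }
  rewrite <- (is_derive_C_unique _ _ _ _ H Hconst).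
  apply RInt_ext. intros s _. rewrite Rplus_0_r. reflexivity.
Qed.

Lemma Ir_Rot_derivative (dthf : HFun) :
  (forall x y t, is_derive_C (fun th => Rot th f x y t) 0 (dthf x y t)) ->
  forall x y t, exists dth dT : C,
    is_derive_C (fun th => Rot th (Ir a b f) x y t) 0 dth /\
    is_derive_C (fun s => Ir a b f x y s) t dT /\
    Ir a b dthf x y t = Cminus dth (Cmult (RtoC (/ 2 * r)) dT).
Proof.
  intros Hd x y t.
  assert (Hss : sqrt r * sqrt r = r) by (apply sqrt_sqrt, Rlt_le, ratio_pos).
  set (Kth := od x y t (fun _ => - y) (fun _ => x)
    (fun s => / 2 * (- y * (sqrt r * sin (s / sqrt r)) - x * (sqrt r * cos (s / sqrt r))))).
  set (KT := od x y t (fun _ => 0) (fun _ => 0) (fun _ => 1)).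
  set (Ks := od x y t (fun s => - sin (s / sqrt r)) (fun s => cos (s / sqrt r))
    (fun s => / 2 * sqrt r + / 2 * (x * cos (s / sqrt r) + y * sin (s / sqrt r)))).
  exists (RInt_C Kth 0 L), (RInt_C KT 0 L).
  split; [apply is_derive_Ir_rot | split; [apply is_derive_Ir_t |]].
  rewrite Ir_orbit.
  transitivity (RInt_C (fun s => Kth s - RtoC (/ 2 * r) * KT s + RtoC (sqrt r) * Ks s)%C 0 L).
  - apply (RInt_ext (V := C_R_CompleteNormedModule)). intros s _.
    unfold orbit_integrand, Kth, KT, Ks, orbit_differential.
    rewrite (Rot_derivative_0 dthf Hd), differential3_lincomb.
    unfold orb_x, orb_y, orb_t. f_equal; try ring.
    replace (/ 2 * r * 1) with (/ 2 * (sqrt r * sqrt r)) by (rewrite Hss; ring). ring.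
  - rewrite RInt_C_lincomb by (apply ex_RInt_orbit_differential; intros; solve_continuous).
    unfold Ks. rewrite RInt_orbit_differential_s. ring.
Qed.

End Derivatives.

End Heisenberg.

Theorem mainTheorem11 :
  forall (a b : nat), (0 < a)%nat -> (0 < b)%nat -> Nat.gcd a b = 1%nat ->
  forall f : HFun, Cc_infty_Hbar f ->
  (forall th x y t,
     Ir a b (Rot th f) x y t =
     Ir a b f (rotx th x y) (roty th x y) (t - / 2 * ratio a b * th)) /\
  (forall dthf : HFun,
     (* dthf = partial_theta f = d/dtheta|_{theta=0} R_theta^* f *)
     (forall x y t, is_derive (K := R_AbsRing) (V := C_R_NormedModule)
                      (fun th => Rot th f x y t) 0 (dthf x y t)) ->
     forall x y t,
       exists dth dT : C,
         is_derive (K := R_AbsRing) (V := C_R_NormedModule)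
           (fun th => Rot th (Ir a b f) x y t) 0 dth /\
         is_derive (K := R_AbsRing) (V := C_R_NormedModule)
           (fun s => Ir a b f x y s) t dT /\
         Ir a b dthf x y t = Cminus dth (Cmult (RtoC (/ 2 * ratio a b)) dT)).
Proof.
  intros a b Ha Hb _ f [Hsmooth [Hper _]].
  destruct (Hsmooth 1%nat) as [Hc [fx [fy [ft [Dx [Dy [Dt [[Cx _] [[Cy _] [Ct _]]]]]]]]]].
  split.
  - exact (Ir_Rot a b Ha Hb f Hc Hper).
  - exact (Ir_Rot_derivative a b Ha Hb f fx fy ft Hc Hper Dx Dy Dt Cx Cy Ct).
Qed.
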